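(* Let $j \in [d]$ and let $\mathcal{Y} = \sum_{k=1}^r \alpha_k \bigcirc_{\ell=1}^d \mathbf{y}^{(\ell)}_k \in \mathbb{C}^{n_1\times\cdots\times n_d}$ be a rank-$r$ tensor in standard form. Let $\epsilon \in (0,1)$ and suppose $\mathbf{A} \in \mathbb{C}^{m\times n_j}$ is an $(\epsilon/4)$-JL embedding into $\mathbb{C}^m$ of the $2r^2 - r$ vectors $$\Big(\bigcup_{1\le h<k\le r}\{\mathbf{y}^{(j)}_k - \mathbf{y}^{(j)}_h,\ \mathbf{y}^{(j)}_k + \mathbf{y}^{(j)}_h,\ \mathbf{y}^{(j)}_k - \mathrm{i}\,\mathbf{y}^{(j)}_h,\ \mathbf{y}^{(j)}_k + \mathrm{i}\,\mathbf{y}^{(j)}_h\}\Big)\cup\{\mathbf{y}^{(j)}_k\}_{k\in[r]} \subset \mathbb{C}^{n_j}.$$ Let $\mathcal{Y}' := \mathcal{Y}\times_j \mathbf{A}$, written in standard form as $$\mathcal{Y}' = \sum_{k=1}^r \alpha'_k \Big( \big(\bigcirc_{\ell<j}\mathbf{y}^{(\ell)}_k\big)\bigcirc \frac{\mathbf{A}\mathbf{y}^{(j)}_k}{\|\mathbf{A}\mathbf{y}^{(j)}_k\|_2}\bigcirc\big(\bigcirc_{\ell>j}\mathbf{y}^{(\ell)}_k\big)\Big),\qquad \alpha'_k = \alpha_k\|\mathbf{A}\mathbf{y}^{(j)}_k\|_2 .$$ Then: (1) $|\alpha'_k - \alpha_k| \leq \epsilon|\alpha_k|/4$ for all $k\in[r]$,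 so that $\|\boldsymbol\alpha'\|_\infty \leq (1+\epsilon/4)\|\boldsymbol\alpha\|_\infty$; (2) $\mu_{\mathcal{Y}',j} \leq \frac{\mu_{\mathcal{Y},j}+\epsilon}{1-\epsilon/4}$, and $\mu_{\mathcal{Y}',\ell} = \mu_{\mathcal{Y},\ell}$ for all $\ell\in[d]\setminus\{j\}$; (3) $\displaystyle \big|\|\mathcal{Y}'\|^2 - \|\mathcal{Y}\|^2\big| \leq \epsilon\Big(1+\sqrt{r(r-1)}\prod_{\ell\neq j}\mu_{\mathcal{Y},\ell}\Big)\|\boldsymbol\alpha\|_2^2 \leq \epsilon\big(1+r\mu_{\mathcal{Y}}^{d-1}\big)\|\boldsymbol\alpha\|_2^2 \leq \epsilon(r+1)\|\boldsymbol\alpha\|_2^2.$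
   Context: Tensors in $\mathbb{C}^{n_1\times\cdots\times n_d}$ have inner product $\langle\mathcal{X},\mathcal{Y}\rangle=\sum\mathcal{X}_{i_1\dots i_d}\overline{\mathcal{Y}_{i_1\dots i_d}}$ and norm $\|\cdot\|$; $\bigcirc$ is the outer product; the $j$-mode product is $(\mathcal{X}\times_j\mathbf{U})_{i_1,\dots,\ell,\dots,i_d}=\sum_{i_j}\mathcal{X}_{i_1,\dots,i_j,\dots,i_d}\mathbf{U}_{\ell,i_j}$; $\mathrm{i}$ is the imaginary unit. A linear map $L$ is an $\epsilon$-JL embedding of a set $S$ if for each $x\in S$, $\|L(x)\|^2=(1+\epsilon_x)\|x\|^2$ for some $\epsilon_x\in(-\epsilon,\epsilon)$. A rank-$r$ tensor in standard form is $\mathcal{Y}=\sum_{k=1}^r\alpha_k\bigcirc_{\ell=1}^d\mathbf{y}^{(\ell)}_k$ with $\|\mathbf{y}^{(\ell)}_k\|_2=1$ for all $\ell,k$; $\boldsymbol\alpha=(\alpha_1,\dots,\alpha_r)$. Relative to this representation, the modewise coherences are $\mu_{\mathcal{Y},\ell}=\max_{k\ne h}|\langle\mathbf{y}^{(\ell)}_k,\mathbf{y}^{(\ell)}_h\rangle|$ and the maximum modewise coherence is $\mu_{\mathcal{Y}}=\max_{\ell\in[d]}\mu_{\mathcal{Y},\ell}$ (for $\mathcal{Y}'$, these are computed from the displayed standard form of $\mathcal{Y}'$). *)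

From HB Require Import structures.
From mathcomp Require Import all_boot all_order all_algebra.
From mathcomp Require Import complex.
From mathcomp Require Import reals.
Set Implicit Arguments. Unset Strict Implicit. Unset Printing Implicit Defensive.
Import Order.TTheory GRing.Theory Num.Theory.
Local Open Scope ring_scope.

Section Defs.
Variable R : realType.
Local Notation C := R[i].

Definition vdot (p : nat) (x y : 'cV[C]_p) : C := \sum_(i < p) x i 0 * (y i 0)^*.
Definition vnorm (p : nat) (x : 'cV[C]_p) : C := sqrtC (\sum_(i < p) `|x i 0| ^+ 2).

(* entry x of v, or 0 if out of range (used only to avoid dependent casts) *)
Definition vget (p : nat) (v : 'cV[C]_p) (x : nat) : C :=
  if insub x is Some i then v i 0 else 0.

Definition JL_embedding (m p : nat) (eps : C) (A : 'M[C]_(m, p)) (S : 'cV[C]_p -> Prop) :=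
  forall x, S x -> exists ex : C, - eps < ex < eps /\
     vnorm (A *m x) ^+ 2 = (1 + ex) * vnorm x ^+ 2.

Definition tidx (d : nat) (n : 'I_d -> nat) := {dffun forall l : 'I_d, 'I_(n l)}.
Definition tensor (d : nat) (n : 'I_d -> nat) := tidx n -> C.

Definition tdot d (n : 'I_d -> nat) (X Y : tensor n) : C :=
  \sum_(i : tidx n) X i * (Y i)^*.
Definition tnorm d (n : 'I_d -> nat) (X : tensor n) : C :=
  sqrtC (\sum_(i : tidx n) `|X i| ^+ 2).

Definition outer d (n : 'I_d -> nat) (v : forall l : 'I_d, 'cV[C]_(n l)) : tensor n :=
  fun i => \prod_(l < d) v l (i l) 0.

Definition rank_tensor d (n : 'I_d -> nat) (r : nat) (alpha : 'I_r -> C)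
  (y : forall l : 'I_d, 'I_r -> 'cV[C]_(n l)) : tensor n :=
  fun i => \sum_(k < r) alpha k * outer (fun l => y l k) i.

Definition standard_form d (n : 'I_d -> nat) (r : nat)
  (y : forall l : 'I_d, 'I_r -> 'cV[C]_(n l)) :=
  forall l k, vnorm (y l k) = 1.

Definition upd d (n : 'I_d -> nat) (j : 'I_d) (m : nat) : 'I_d -> nat :=
  fun l => if l == j then m else n l.

Lemma sub_idx_proof d (n : 'I_d -> nat) (j : 'I_d) (m : nat)
  (i' : tidx (upd n j m)) (t : 'I_(n j)) (l : 'I_d) :
  ((if l == j then val t else val (i' l)) < n l)%N.
Proof.
case: (eqVneq l j) => [->|nlj]; first exact: ltn_ord.
move: (i' l); rewrite /upd (negbTE nlj) => x.
exact: ltn_ord.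
Qed.

Lemma j_idx_proof d (n : 'I_d -> nat) (j : 'I_d) (m : nat) (i' : tidx (upd n j m)) :
  (val (i' j) < m)%N.
Proof. by move: (i' j); rewrite /upd eqxx => x; exact: ltn_ord. Qed.

Definition sub_idx d (n : 'I_d -> nat) (j : 'I_d) (m : nat)
  (i' : tidx (upd n j m)) (t : 'I_(n j)) : tidx n :=
  [ffun l => Ordinal (sub_idx_proof i' t l)].

(* j-mode product:  (X x_j U)_{i_1..l..i_d} = sum_{i_j} X_{i_1..i_j..i_d} U_{l,i_j} *)
Definition mode_prod d (n : 'I_d -> nat) (X : tensor n) (j : 'I_d) (m : nat)
  (U : 'M[C]_(m, n j)) : tensor (upd n j m) :=
  fun i' => \sum_(t < n j) X (sub_idx i' t) * U (Ordinal (j_idx_proof i')) t.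

(* modewise coherence of a family of r vectors: max_{k<>h} |<v_k, v_h>|
   (0 when r <= 1) *)
Definition coherence (p r : nat) (v : 'I_r -> 'cV[C]_p) : C :=
  \big[Num.max/0]_(k < r) \big[Num.max/0]_(h < r | h != k) `|vdot (v k) (v h)|.

Definition inf_norm (r : nat) (a : 'I_r -> C) : C := \big[Num.max/0]_(k < r) `|a k|.
Definition l2_norm (r : nat) (a : 'I_r -> C) : C := sqrtC (\sum_(k < r) `|a k| ^+ 2).

End Defs.

(* By polarization, a matrix that distorts the squared norms of y_k +- y_h and
   y_k +- i y_h by at most eps/4 distorts the inner product of the unit vectors
   y_k, y_h by at most eps/2.  Together with ||A y_k|| in [1 - eps/4, 1 + eps/4]
   this gives the bounds on the weights and on the mode-j coherence.  The squared
   norm of a rank-r tensor is the hermitian form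
   sum_{k,h} alpha_k conj(alpha_h) prod_l <y_k^(l), y_h^(l)>, and the mode-j
   product only replaces y_k^(j) by A y_k^(j).  So ||Y'||^2 - ||Y||^2 is the same
   form with the mode-j inner products replaced by their errors, which are at
   most eps/4 on the diagonal and (eps/2) prod_{l <> j} mu_l off it; the estimate
   (sum_k |alpha_k|)^2 <= r ||alpha||^2 then bounds the off-diagonal part. *)

From HB Require Import structures.
From mathcomp Require Import all_boot all_order all_algebra.
From mathcomp Require Import complex.
From mathcomp Require Import reals.
From mathcomp Require Import ring.
Import Order.TTheory GRing.Theory Num.Theory.
Set Implicit Arguments. Unset Strict Implicit. Unset Printing Implicit Defensive.
Local Open Scope ring_scope.

Section NonnegBigmax.
Variables (K : numDomainType) (I : finType) (P : pred I) (F : I -> K).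
Hypothesis F_ge0 : forall i, P i -> 0 <= F i.

Lemma bigmax_ge0 : 0 <= \big[Num.max/0]_(i | P i) F i.
Proof.
elim/big_ind: _ => // x y x0 y0.
by rewrite comparable_le_max ?x0 // real_comparable ?ger0_real.
Qed.

Lemma le_bigmax_nneg i0 : P i0 -> F i0 <= \big[Num.max/0]_(i | P i) F i.
Proof.
move=> Pi0; have F_real i : P i -> F i \is Num.real by move/F_ge0/ger0_real.
elim: (index_enum I) (mem_index_enum i0) => // x s IH.
rewrite inE big_cons; case: ifP => Px.
  rewrite comparable_le_max ?real_comparable ?F_real //; last exact: bigmax_real.
  by case/predU1P=> [->|/IH->]; rewrite ?lexx ?orbT.
by case/predU1P=> [Ex|/IH//]; rewrite -Ex Pi0 in Px.
Qed.

End NonnegBigmax.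

Lemma normr_le_of_bounds (K : numDomainType) (E x : K) : - E < x < E -> `|x| <= E.
Proof.
case/andP=> lo hi; rewrite -(ler_pMn2r (_ : 0 < 2)%N) // -normrMn.
have -> : x *+ 2 = (x + E) - (E - x) by rewrite mulr2n; ring.
have xE_gt0 : 0 < x + E by rewrite -[E in x + E]opprK subr_gt0.
have -> : E *+ 2 = `|x + E| + `|E - x| by rewrite !gtr0_norm ?subr_gt0 // mulr2n; ring.
exact: ler_normB.
Qed.

Lemma polarization_error_le (K : numClosedFieldType) (E a b q1 q2 q3 q4 e1 e2 e3 e4 : K) :
  0 <= q1 -> 0 <= q2 -> 0 <= q3 -> 0 <= q4 ->
  `|e1| <= E -> `|e2| <= E -> `|e3| <= E -> `|e4| <= E ->
  4 * a = (1 + e1) * q1 - (1 + e2) * q2 + 'i * ((1 + e3) * q3 - (1 + e4) * q4) ->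
  4 * b = q1 - q2 + 'i * (q3 - q4) ->
  4 * `|a - b| <= E * (q1 + q2 + q3 + q4).
Proof.
move=> q1_ge0 q2_ge0 q3_ge0 q4_ge0 e1E e2E e3E e4E ea eb.
have eq_le e q : 0 <= q -> `|e| <= E -> `|e * q| <= E * q.
  by move=> q_ge0 eE; rewrite normrM (ger0_norm q_ge0) ler_wpM2r.
have -> : 4 * `|a - b| = `|e1 * q1 - e2 * q2 + 'i * (e3 * q3 - e4 * q4)|.
  by rewrite -[4]ger0_norm ?ler0n // -normrM mulrBr ea eb; congr `|_|; ring.
apply: le_trans (ler_normD _ _) _; rewrite normrM normCi mul1r.
have -> : E * (q1 + q2 + q3 + q4) = (E * q1 + E * q2) + (E * q3 + E * q4) by ring.
by apply: lerD; apply: le_trans (ler_normB _ _) _; apply: lerD; apply: eq_le.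
Qed.

Lemma norm_sqrt_sub1_le (K : numDomainType) (s e E : K) :
  0 <= s -> s ^+ 2 = 1 + e -> `|e| <= E -> `|s - 1| <= E.
Proof.
move=> s_ge0 se eE; apply: le_trans eE.
have -> : e = (s - 1) * (s + 1) by rewrite -[e](addKr 1) -se; ring.
rewrite normrM (ger0_norm (_ : 0 <= s + 1)) ?addr_ge0 //.
by rewrite ler_peMr ?normr_ge0 // lerDr.
Qed.

Lemma sqr_sum_le (K : numDomainType) r (a : 'I_r -> K) : (forall k, 0 <= a k) ->
  (\sum_k a k) ^+ 2 <= r%:R * \sum_k a k ^+ 2.
Proof.
move=> a_ge0.
have sum_sqr_ge0 : 0 <= \sum_k \sum_h (a k - a h) ^+ 2.
  apply: sumr_ge0 => k _; apply: sumr_ge0 => h _.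
  by rewrite -real_normK ?exprn_ge0 // rpredB // ger0_real.
have expand : \sum_k \sum_h (a k - a h) ^+ 2 =
    (r%:R * \sum_k a k ^+ 2) *+ 2 - ((\sum_k a k) ^+ 2) *+ 2.
  transitivity (\sum_(k < r) (a k ^+ 2 *+ r + \sum_h a h ^+ 2 - 2 * (a k * \sum_h a h))).
    apply: eq_bigr => k _.
    transitivity (\sum_(h < r) (a k ^+ 2 + a h ^+ 2 - 2 * (a k * a h))).
      by apply: eq_bigr => h _; ring.
    by rewrite sumrB big_split /= sumr_const card_ord -!mulr_sumr.
  by rewrite sumrB big_split /= sumr_const card_ord -mulr_sumr -mulr_suml sumrMnl; ring.
by move: sum_sqr_ge0; rewrite expand subr_ge0 ler_pMn2r.
Qed.

Lemma norm_double_sum_le (K : numClosedFieldType) r (a : 'I_r -> K)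
    (D : 'I_r -> 'I_r -> K) (b0 b1 : K) :
  (forall k, `|D k k| <= b0) -> (forall k h, h != k -> `|D k h| <= b1) ->
  `|\sum_k \sum_h a k * (a h)^* * D k h| <=
  b0 * \sum_k `|a k| ^+ 2 + b1 * ((\sum_k `|a k|) ^+ 2 - \sum_k `|a k| ^+ 2).
Proof.
move=> D_diag D_off.
have row k : `|\sum_h a k * (a h)^* * D k h| <=
    `|a k| ^+ 2 * b0 + b1 * (`|a k| * \sum_(h | h != k) `|a h|).
  rewrite (bigD1 k) //=; apply: le_trans (ler_normD _ _) _; apply: lerD.
    by rewrite !normrM norm_conjC -expr2 ler_wpM2l ?exprn_ge0.
  apply: le_trans (ler_norm_sum _ _ _) _; rewrite !mulr_sumr; apply: ler_sum => h hk.
  rewrite !normrM norm_conjC [X in _ <= X]mulrC ler_wpM2l ?mulr_ge0 //.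
  exact: D_off.
apply: le_trans (ler_norm_sum _ _ _) _; apply: le_trans (ler_sum _ (fun k _ => row k)) _.
have sum_neq k : \sum_(h | h != k) `|a h| = \sum_h `|a h| - `|a k|.
  by rewrite [in RHS](bigD1 k) //= addrC addrK.
under eq_bigr => k _ do rewrite sum_neq mulrBr.
have sum_sqr : \sum_k `|a k| ^+ 2 = \sum_k `|a k| * `|a k|.
  by apply: eq_bigr => k _; rewrite expr2.
rewrite big_split /= -mulr_sumr sumrB -mulr_suml mulrC !sum_sqr.
by rewrite [(\sum_k _) ^+ 2]expr2 mulr_suml.
Qed.

Lemma one_sub_quarter_gt0 (K : numFieldType) (eps : K) : eps < 1 -> 0 < 1 - eps / 4.
Proof.
by move=> eps_lt1; rewrite subr_gt0 ltr_pdivrMr ?ltr0n // mul1r (lt_le_trans eps_lt1) ?ler1n.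
Qed.

Lemma coherence_shift_le (K : numFieldType) (mu eps : K) :
  0 <= mu <= 1 -> 0 < eps < 1 ->
  (mu + eps / 2) / (1 - eps / 4) ^+ 2 <= (mu + eps) / (1 - eps / 4).
Proof.
case/andP=> mu_ge0 mu_le1 /andP[eps_gt0 eps_lt1].
have w_gt0 := one_sub_quarter_gt0 eps_lt1.
rewrite ler_pdivrMr ?exprn_gt0 // expr2 mulrA divfK ?gt_eqF // -subr_ge0.
have -> : (mu + eps) * (1 - eps / 4) - (mu + eps / 2) = eps / 4 * ((1 - mu) + (1 - eps)).
  by field.
by rewrite mulr_ge0 ?divr_ge0 ?(ltW eps_gt0) // addr_ge0 // subr_ge0 // ltW.
Qed.

Lemma natr_pred_le_sqrt (K : numClosedFieldType) r : r%:R - 1 <= sqrtC ((r * (r - 1))%:R : K).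
Proof.
case: r => [|r]; first by rewrite mul0n sqrtC0 sub0r oppr_le0.
rewrite -natr1 addrK subn1 /= -{1}(sqrCK (ler0n K r)) ler_sqrtC ?nnegrE ?ler0n ?exprn_ge0 //.
by rewrite -natrX ler_nat -mulnn leq_mul.
Qed.

Lemma sqrt_mul_pred_le (K : numClosedFieldType) r : sqrtC ((r * (r - 1))%:R : K) <= r%:R.
Proof.
rewrite -(sqrCK (ler0n K r)) ler_sqrtC ?nnegrE ?ler0n ?exprn_ge0 // -natrX ler_nat.
by rewrite -mulnn leq_mul // leq_subr.
Qed.

Lemma JL_norm_error_le (K : numClosedFieldType) r (eps M S T : K) :
  0 < eps -> 0 <= M -> 0 <= S -> T <= r%:R * S ->
  eps / 4 * S + eps / 2 * M * (T - S) <= eps * (1 + sqrtC ((r * (r - 1))%:R) * M) * S.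
Proof.
move=> eps_gt0 M_ge0 S_ge0 TS; set s := sqrtC _.
have frac_le k : (0 < k)%N -> eps / k%:R <= eps.
  by move=> k_gt0; rewrite ler_pdivrMr ?ltr0n // ler_peMr ?(ltW eps_gt0) // ler1n.
have -> : eps * (1 + s * M) * S = eps * S + eps * (M * (s * S)) by ring.
apply: lerD; first by rewrite ler_wpM2r ?frac_le.
apply: (@le_trans _ _ (eps / 2 * (M * (s * S)))).
  rewrite -mulrA; apply: ler_wpM2l; first by rewrite divr_ge0 // ltW.
  apply: ler_wpM2l => //; apply: le_trans (ler_wpM2r S_ge0 (natr_pred_le_sqrt K r)).
  by rewrite mulrBl mul1r lerD2r.
by apply: ler_wpM2r (frac_le 2%N isT); rewrite !mulr_ge0 // sqrtC_ge0 ler0n.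
Qed.

Lemma prod_le_bigmax_pow (K : numClosedFieldType) d r (mu : 'I_d -> K) (j : 'I_d) (eps S : K) :
  (forall l, 0 <= mu l) -> 0 <= eps -> 0 <= S ->
  eps * (1 + sqrtC ((r * (r - 1))%:R) * \prod_(l < d | l != j) mu l) * S <=
  eps * (1 + r%:R * (\big[Num.max/0]_(l < d) mu l) ^+ d.-1) * S.
Proof.
move=> mu_ge0 eps_ge0 S_ge0; rewrite ler_wpM2r // ler_wpM2l // lerD2l.
rewrite ler_pM ?sqrtC_ge0 ?ler0n ?prodr_ge0 ?sqrt_mul_pred_le //.
have -> : (\big[Num.max/0]_(l < d) mu l) ^+ d.-1 =
    \prod_(l < d | l != j) \big[Num.max/0]_(l < d) mu l.
  by rewrite prodr_const cardC1 card_ord.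
by apply: ler_prod => l _; rewrite mu_ge0 le_bigmax_nneg.
Qed.

Lemma pow_le1_bound (K : numDomainType) r k (eps M S : K) :
  0 <= eps -> 0 <= S -> 0 <= M <= 1 ->
  eps * (1 + r%:R * M ^+ k) * S <= eps * (r%:R + 1) * S.
Proof.
move=> eps_ge0 S_ge0 /andP[M_ge0 M_le1].
rewrite ler_wpM2r // ler_wpM2l // addrC lerD2r -{2}(mulr1 r%:R) ler_wpM2l //.
exact: exprn_ile1.
Qed.

Section InnerProduct.
Variable R : realType.
Local Notation C := R[i].
Implicit Types (p : nat) (c : C).

Lemma vdotDl p (x y z : 'cV[C]_p) : vdot (x + y) z = vdot x z + vdot y z.
Proof. by rewrite /vdot -big_split; apply: eq_bigr => k _; rewrite mxE mulrDl. Qed.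

Lemma vdotDr p (x y z : 'cV[C]_p) : vdot x (y + z) = vdot x y + vdot x z.
Proof. by rewrite /vdot -big_split; apply: eq_bigr => k _; rewrite mxE rmorphD mulrDr. Qed.

Lemma vdotZl p c (x y : 'cV[C]_p) : vdot (c *: x) y = c * vdot x y.
Proof. by rewrite /vdot mulr_sumr; apply: eq_bigr => k _; rewrite mxE mulrA. Qed.

Lemma vdotZr p c (x y : 'cV[C]_p) : vdot x (c *: y) = c^* * vdot x y.
Proof. by rewrite /vdot mulr_sumr; apply: eq_bigr => k _; rewrite mxE rmorphM mulrCA. Qed.

Lemma vdotC p (x y : 'cV[C]_p) : vdot y x = (vdot x y)^*.
Proof.
by rewrite /vdot rmorph_sum; apply: eq_bigr => k _; rewrite rmorphM /= conjCK mulrC.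
Qed.

Lemma vnorm_sqr p (x : 'cV[C]_p) : vnorm x ^+ 2 = vdot x x.
Proof.
by rewrite /vnorm sqrtCK; apply: eq_bigr => k _; rewrite normCK.
Qed.

Lemma vnorm_ge0 p (x : 'cV[C]_p) : 0 <= vnorm x.
Proof. by rewrite sqrtC_ge0 sumr_ge0 // => k _; rewrite exprn_ge0. Qed.

Lemma vdot_ge0 p (x : 'cV[C]_p) : 0 <= vdot x x.
Proof. by rewrite -vnorm_sqr exprn_ge0 ?vnorm_ge0. Qed.

Lemma vdot_addZ p c (x y : 'cV[C]_p) :
  vdot (x + c *: y) (x + c *: y) =
  vdot x x + c^* * vdot x y + c * vdot y x + c * c^* * vdot y y.
Proof. by rewrite !vdotDl !vdotDr !vdotZl !vdotZr; ring. Qed.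

Lemma norm_vdot_le1 p (u v : 'cV[C]_p) :
  vdot u u = 1 -> vdot v v = 1 -> `|vdot u v| <= 1.
Proof.
move=> u1 v1; have := vdot_ge0 (u + (- vdot u v) *: v).
rewrite vdot_addZ u1 v1 (vdotC u v) rmorphN.
have -> : 1 + - (vdot u v)^* * vdot u v + - vdot u v * (vdot u v)^* +
   - vdot u v * - (vdot u v)^* * 1 = 1 - vdot u v * (vdot u v)^* by ring.
rewrite -normCK subr_ge0 => h.
by rewrite -(expr_le1 (n := 2)) // normr_ge0.
Qed.

Lemma vdot_polarization p (x y : 'cV[C]_p) :
  let Q c := vdot (x + c *: y) (x + c *: y) in
  4 * vdot x y = Q 1 - Q (-1) + 'i * (Q 'i - Q (- 'i)) /\
  Q 1 + Q (-1) + Q 'i + Q (- 'i) = 4 * (vdot x x + vdot y y).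
Proof.
rewrite /= !vdot_addZ rmorph1 rmorphN1 rmorphN /= conjCi opprK.
have ii : ('i : C) * 'i = -1 by rewrite -expr2 sqrCi.
by split; ring: ii.
Qed.

Lemma JL_embedding_sub m p (E : C) (A : 'M[C]_(m, p)) (S S' : 'cV[C]_p -> Prop) :
  (forall x, S' x -> S x) -> JL_embedding E A S -> JL_embedding E A S'.
Proof. by move=> S'S AS x /S'S /AS. Qed.

Lemma JL_embedding_vdot m p (E : C) (A : 'M[C]_(m, p)) (x y : 'cV[C]_p) :
  JL_embedding E A
    (fun z => z = x - y \/ z = x + y \/ z = x - 'i *: y \/ z = x + 'i *: y) ->
  `|vdot (A *m x) (A *m y) - vdot x y| <= E * (vdot x x + vdot y y).
Proof.
move=> AJL.
have JLc c : [|| c == 1, c == -1, c == 'i | c == - 'i] -> exists2 e, `|e| <= E &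
    vdot (A *m x + c *: (A *m y)) (A *m x + c *: (A *m y)) =
    (1 + e) * vdot (x + c *: y) (x + c *: y).
  move=> hc; have [|e [e_bounds eq_e]] := AJL (x + c *: y).
    by case/or4P: hc => /eqP->; rewrite ?scale1r ?scaleN1r ?scaleNr; do ?[left; done | right].
  exists e; first exact: normr_le_of_bounds.
  by rewrite scalemxAr -mulmxDr -!vnorm_sqr.
move: (JLc 1) (JLc (-1)) (JLc 'i) (JLc (- 'i)); rewrite !eqxx /= ?orbT.
move=> /(_ isT) [e1 b1 Q1] /(_ isT) [e2 b2 Q2] /(_ isT) [e3 b3 Q3] /(_ isT) [e4 b4 Q4].
have /= [polA _] := vdot_polarization (A *m x) (A *m y).
have /= [pol sumQ] := vdot_polarization x y.
rewrite Q1 Q2 Q3 Q4 in polA.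
rewrite -(ler_pM2l (_ : 0 < 4)) ?ltr0n // mulrCA -sumQ.
by apply: polarization_error_le polA pol; rewrite ?vdot_ge0.
Qed.

Lemma vget_ord p (v : 'cV[C]_p) (t : 'I_p) : vget v t = v t 0.
Proof. by rewrite /vget valK. Qed.

Lemma vdot_col_vget p q (u v : 'cV[C]_p) : q = p ->
  vdot (\col_(t < q) vget u t) (\col_(t < q) vget v t) = vdot u v.
Proof. by move=> qp; subst q; apply: eq_bigr => t _; rewrite !mxE !vget_ord. Qed.

Definition normalize p (x : 'cV[C]_p) : 'cV[C]_p := (vnorm x)^-1 *: x.

Lemma vdot_normalize p (x x' : 'cV[C]_p) :
  vdot (normalize x) (normalize x') = vdot x x' / (vnorm x * vnorm x').
Proof.
rewrite /normalize vdotZl vdotZr conj_Creal ?rpredV ?ger0_real ?vnorm_ge0 //.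
by rewrite invfM; ring.
Qed.

End InnerProduct.

Section Coherence.
Variable R : realType.
Local Notation C := R[i].

Lemma coherence_ge0 p r (v : 'I_r -> 'cV[C]_p) : 0 <= coherence v.
Proof. by apply: bigmax_ge0 => k _; apply: bigmax_ge0. Qed.

Lemma norm_vdot_le_coherence p r (v : 'I_r -> 'cV[C]_p) k h :
  h != k -> `|vdot (v k) (v h)| <= coherence v.
Proof.
move=> hk; apply: (@le_trans _ _ (\big[Num.max/0]_(h' | h' != k) `|vdot (v k) (v h')|)).
  exact: le_bigmax_nneg.
apply: (le_bigmax_nneg (P := xpredT)
  (F := fun k => \big[Num.max/0]_(h' | h' != k) `|vdot (v k) (v h')|)) => // k' _.
exact: bigmax_ge0.
Qed.

Lemma coherence_le p r (v : 'I_r -> 'cV[C]_p) b : 0 <= b ->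
  (forall k h, h != k -> `|vdot (v k) (v h)| <= b) -> coherence v <= b.
Proof. by move=> b_ge0 vb; apply: bigmax_le => // k _; apply: bigmax_le => // h; apply: vb. Qed.

Lemma coherence_le1 p r (v : 'I_r -> 'cV[C]_p) :
  (forall k, vnorm (v k) = 1) -> coherence v <= 1.
Proof.
move=> v1; apply: coherence_le => // k h _.
by apply: norm_vdot_le1; rewrite -vnorm_sqr v1 expr1n.
Qed.

Lemma eq_coherence p q r (u : 'I_r -> 'cV[C]_p) (v : 'I_r -> 'cV[C]_q) :
  (forall k h, vdot (u k) (u h) = vdot (v k) (v h)) -> coherence u = coherence v.
Proof. by move=> uv; apply: eq_bigr => k _; apply: eq_bigr => h _; rewrite uv. Qed.

End Coherence.

(* [upd n j m l] reduces to [m] or [n l] only after case analysis on [l == j],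
   hence the entries are read through [vget]. *)
Definition replace_factor (R : realType) d (n : 'I_d -> nat) (j : 'I_d) m
    (w : 'cV[R[i]]_m) (v : forall l, 'cV[R[i]]_(n l)) : forall l, 'cV[R[i]]_(upd n j m l) :=
  fun l => \col_(t < upd n j m l) (if l == j then vget w t else vget (v l) t).

Section ReplaceFactor.
Variables (R : realType) (d : nat) (n : 'I_d -> nat) (j : 'I_d) (m : nat).
Local Notation C := R[i].

Lemma vdot_replace_factor_eq (w w' : 'cV[C]_m) (v v' : forall l, 'cV[C]_(n l)) :
  vdot (replace_factor j w v j) (replace_factor j w' v' j) = vdot w w'.
Proof. by rewrite /replace_factor eqxx vdot_col_vget // /upd eqxx. Qed.

Lemma vdot_replace_factor_neq (w w' : 'cV[C]_m) (v v' : forall l, 'cV[C]_(n l)) l :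
  l != j ->
  vdot (replace_factor j w v l) (replace_factor j w' v' l) = vdot (v l) (v' l).
Proof. by move=> lj; rewrite /replace_factor (negbTE lj) vdot_col_vget // /upd (negbTE lj). Qed.

End ReplaceFactor.

Lemma big_dffun_prod (K : comPzRingType) (I : finType) (T_ : I -> finType)
    (F : forall i, T_ i -> K) :
  \sum_(f : {dffun forall i : I, T_ i}) \prod_i F i (f i) =
  \prod_i \sum_(t : T_ i) F i t.
Proof.
pose P_ := fun i => [ffun x => F i x].
rewrite (reindex (@dffun_of_fprod I T_)); last first.
  exact/onW_bij/dffun_of_fprod_bij.
transitivity (\sum_(t : fprod T_) \prod_(i in I) P_ i (t i)).
  by apply: eq_bigr => t _; apply: eq_bigr => i _; rewrite !ffunE.
rewrite (@big_fprod _ 0 1 *%R +%R I T_ P_).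
transitivity (\prod_i \sum_(t : T_ i) P_ i t); last first.
  by apply: eq_bigr => i _; apply: eq_bigr => t _; rewrite ffunE.
under [RHS]eq_bigr => i _ do rewrite (big_tag P_).
by rewrite bigA_distr_big_dep.
Qed.

Section Tensors.
Variables (R : realType) (d : nat) (n : 'I_d -> nat).
Local Notation C := R[i].

Lemma tnorm_sqr (X : tensor R n) : tnorm X ^+ 2 = tdot X X.
Proof. by rewrite sqrtCK; apply: eq_bigr => i _; rewrite normCK. Qed.

Lemma tdot_outer (v w : forall l, 'cV[C]_(n l)) :
  tdot (outer v) (outer w) = \prod_l vdot (v l) (w l).
Proof.
rewrite -(big_dffun_prod (fun l t => v l t 0 * (w l t 0)^*)).
by apply: eq_bigr => i _; rewrite big_split /= rmorph_prod.
Qed.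

Lemma tdot_rank_tensor r (a b : 'I_r -> C) (v w : forall l, 'I_r -> 'cV[C]_(n l)) :
  tdot (rank_tensor a v) (rank_tensor b w) =
  \sum_(k < r) \sum_(h < r) a k * (b h)^* * \prod_l vdot (v l k) (w l h).
Proof.
rewrite /tdot /rank_tensor.
under eq_bigr => i _ do rewrite rmorph_sum mulr_suml.
rewrite exchange_big; apply: eq_bigr => k _.
under eq_bigr => i _ do rewrite mulr_sumr.
rewrite exchange_big; apply: eq_bigr => h _.
rewrite -(tdot_outer (fun l => v l k) (fun l => w l h)) /tdot mulr_sumr.
apply: eq_bigr => i _.
by rewrite rmorphM /=; ring.
Qed.

End Tensors.

Section ModeProduct.
Variables (R : realType) (d : nat) (n : 'I_d -> nat) (r : nat).
Variables (alpha : 'I_r -> R[i]) (y : forall l, 'I_r -> 'cV[R[i]]_(n l)).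
Variables (j : 'I_d) (m : nat) (A : 'M[R[i]]_(m, n j)).

Lemma mode_prod_rank_tensor :
  mode_prod (rank_tensor alpha y) A =1
  rank_tensor alpha (fun l k => replace_factor j (A *m y j k) (fun l => y l k) l).
Proof.
move=> i'; rewrite /mode_prod /rank_tensor /outer /replace_factor.
have val_sub_idx t l : val (sub_idx i' t l) = if l == j then val t else val (i' l).
  by rewrite /sub_idx ffunE.
have sub_idx_j t : sub_idx i' t j = t by apply: val_inj; rewrite val_sub_idx eqxx.
have sub_idx_neq k t l : l != j -> y l k (sub_idx i' t l) 0 =
    (\col_(t0 < upd n j m l) (if l == j then vget (A *m y j k) t0 else vget (y l k) t0))
      (i' l) 0.
  by move=> lj; rewrite mxE (negbTE lj) -vget_ord val_sub_idx (negbTE lj).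
under eq_bigr => t _ do rewrite mulr_suml.
rewrite exchange_big; apply: eq_bigr => k _.
rewrite [in RHS](bigD1 j) //= mxE eqxx /vget (insubT (fun t => t < m)%N (j_idx_proof i')) mxE.
under eq_bigr => t _ do rewrite (bigD1 j) //= sub_idx_j.
under eq_bigr => t _ do under eq_bigr => l lj do rewrite (sub_idx_neq k t l lj).
by rewrite mulr_suml mulr_sumr; apply: eq_bigr => t _; ring.
Qed.

Lemma tnorm_mode_prod_subr :
  tnorm (mode_prod (rank_tensor alpha y) A) ^+ 2 - tnorm (rank_tensor alpha y) ^+ 2 =
  \sum_(k < r) \sum_(h < r) alpha k * (alpha h)^* *
    ((vdot (A *m y j k) (A *m y j h) - vdot (y j k) (y j h)) *
     \prod_(l < d | l != j) vdot (y l k) (y l h)).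
Proof.
have -> : tnorm (mode_prod (rank_tensor alpha y) A) ^+ 2 =
    tdot (rank_tensor alpha (fun l k => replace_factor j (A *m y j k) (fun l => y l k) l))
         (rank_tensor alpha (fun l k => replace_factor j (A *m y j k) (fun l => y l k) l)).
  by rewrite tnorm_sqr; apply: eq_bigr => i _; rewrite mode_prod_rank_tensor.
rewrite tnorm_sqr !tdot_rank_tensor -sumrB; apply: eq_bigr => k _.
rewrite -sumrB; apply: eq_bigr => h _.
rewrite (bigD1 j) //= vdot_replace_factor_eq (bigD1 j (P := xpredT)) //=.
under eq_bigr => l lj do rewrite vdot_replace_factor_neq //.
by ring.
Qed.

End ModeProduct.

Section JLModeProduct.
Variables (R : realType) (d : nat) (n : 'I_d -> nat) (r : nat).
Variables (alpha : 'I_r -> R[i]) (y : forall l : 'I_d, 'I_r -> 'cV[R[i]]_(n l)).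
Variables (j : 'I_d) (eps : R[i]) (m : nat) (A : 'M[R[i]]_(m, n j)).
Hypothesis y_std : standard_form y.
Hypotheses (eps_gt0 : 0 < eps) (eps_lt1 : eps < 1).
Hypothesis A_JL_factors : JL_embedding (eps / 4) A (fun x => exists k, x = y j k).
Hypothesis A_JL_pairs : forall h k : 'I_r, (h < k)%N ->
  JL_embedding (eps / 4) A (fun x => x = y j k - y j h \/ x = y j k + y j h \/
                                     x = y j k - 'i *: y j h \/ x = y j k + 'i *: y j h).

Local Notation nA k := (vnorm (A *m y j k)).
Local Notation y' l :=
  (fun k => replace_factor j (normalize (A *m y j k)) (fun l => y l k) l).

Lemma vdot_std l k : vdot (y l k) (y l k) = 1.
Proof. by rewrite -vnorm_sqr y_std expr1n. Qed.

Lemma JL_factor k : exists2 e, `|e| <= eps / 4 & nA k ^+ 2 = 1 + e.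
Proof.
have [e [e_bounds eq_e]] := A_JL_factors (ex_intro _ k erefl).
by exists e; rewrite ?normr_le_of_bounds // eq_e vnorm_sqr vdot_std mulr1.
Qed.

Lemma JL_factor_norm k : `|nA k - 1| <= eps / 4.
Proof. by have [e eE eq_e] := JL_factor k; apply: norm_sqrt_sub1_le eq_e eE; exact: vnorm_ge0. Qed.

Lemma JL_factor_norm_bounds k : 1 - eps / 4 <= nA k <= 1 + eps / 4.
Proof.
have := JL_factor_norm k.
by rewrite real_ler_norml ?rpredB ?ger0_real ?vnorm_ge0 // lerBrDr lerBlDr addrC [_ + 1]addrC.
Qed.

Lemma JL_pair k h : h != k ->
  `|vdot (A *m y j k) (A *m y j h) - vdot (y j k) (y j h)| <= eps / 2.
Proof.
have halve a b : eps / 4 * (vdot (y j a) (y j a) + vdot (y j b) (y j b)) = eps / 2.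
  by rewrite !vdot_std; field.
rewrite neq_ltn => /orP[hk|kh].
  by rewrite -(halve k h); apply: JL_embedding_vdot; exact: A_JL_pairs.
rewrite (vdotC (A *m y j h)) (vdotC (y j h)) -rmorphB norm_conjC -(halve h k).
by apply: JL_embedding_vdot; exact: A_JL_pairs.
Qed.

Lemma coherence_std l : 0 <= coherence (y l) <= 1.
Proof. by rewrite coherence_ge0 coherence_le1. Qed.

Lemma weights_perturbation k : `|alpha k * nA k - alpha k| <= eps * `|alpha k| / 4.
Proof.
rewrite -{2}[alpha k]mulr1 -mulrBr normrM mulrAC [X in _ <= X]mulrC.
by apply: ler_wpM2l; [exact: normr_ge0 | exact: JL_factor_norm].
Qed.

Lemma inf_norm_perturbation :
  inf_norm (fun k => alpha k * nA k) <= (1 + eps / 4) * inf_norm alpha.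
Proof.
have inf_ge0 : 0 <= inf_norm alpha by apply: bigmax_ge0.
apply: bigmax_le => [|k _]; first by rewrite mulr_ge0 // addr_ge0 // divr_ge0 // ltW.
rewrite normrM (ger0_norm (vnorm_ge0 _)) mulrC.
have /andP[_ nA_le] := JL_factor_norm_bounds k.
by rewrite ler_pM ?vnorm_ge0 // le_bigmax_nneg.
Qed.

Lemma coherence_JL_mode : coherence (y' j) <= (coherence (y j) + eps) / (1 - eps / 4).
Proof.
have w_gt0 := one_sub_quarter_gt0 eps_lt1.
apply: coherence_le => [|k h hk].
  by rewrite divr_ge0 ?(ltW w_gt0) // addr_ge0 ?coherence_ge0 // ltW.
rewrite vdot_replace_factor_eq vdot_normalize normrM normfV normrM !(ger0_norm (vnorm_ge0 _)).
apply: le_trans (coherence_shift_le (coherence_std j) (introT andP (conj eps_gt0 eps_lt1))).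
have vdot_le : `|vdot (A *m y j k) (A *m y j h)| <= coherence (y j) + eps / 2.
  rewrite -(subrK (vdot (y j k) (y j h)) (vdot (A *m y j k) (A *m y j h))) addrC.
  by apply: le_trans (ler_normD _ _) _; rewrite lerD ?norm_vdot_le_coherence ?JL_pair.
have /andP[nAk _] := JL_factor_norm_bounds k; have /andP[nAh _] := JL_factor_norm_bounds h.
rewrite ler_pM ?invr_ge0 ?mulr_ge0 ?vnorm_ge0 // expr2 lef_pV2 ?ler_pM ?(ltW w_gt0) //.
all: by rewrite posrE mulr_gt0 ?(lt_le_trans w_gt0).
Qed.

Lemma coherence_other_modes l : l != j -> coherence (y' l) = coherence (y l).
Proof. by move=> lj; apply: eq_coherence => k h; rewrite vdot_replace_factor_neq. Qed.

Lemma tnorm_JL_mode :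
  `|tnorm (mode_prod (rank_tensor alpha y) A) ^+ 2 - tnorm (rank_tensor alpha y) ^+ 2|
    <= eps * (1 + sqrtC (r * (r - 1))%:R * \prod_(l < d | l != j) coherence (y l))
           * l2_norm alpha ^+ 2.
Proof.
set M := \prod_(l < d | l != j) coherence (y l).
have M_ge0 : 0 <= M by apply: prodr_ge0 => l _; exact: coherence_ge0.
rewrite tnorm_mode_prod_subr /l2_norm sqrtCK.
pose D k h := (vdot (A *m y j k) (A *m y j h) - vdot (y j k) (y j h)) *
  \prod_(l < d | l != j) vdot (y l k) (y l h).
have D_diag k : `|D k k| <= eps / 4.
  have [e eE eq_e] := JL_factor k.
  rewrite /D -vnorm_sqr eq_e vdot_std big1 => [|l _]; last exact: vdot_std.
  by rewrite mulr1 addrC addKr.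
have D_off k h : h != k -> `|D k h| <= eps / 2 * M.
  move=> hk; rewrite normrM ler_pM ?normr_ge0 ?JL_pair // normr_prod.
  by apply: ler_prod => l _; rewrite normr_ge0 norm_vdot_le_coherence.
apply: le_trans (norm_double_sum_le alpha D_diag D_off) _.
apply: JL_norm_error_le => //; first by apply: sumr_ge0 => k _; exact: exprn_ge0.
by apply: sqr_sum_le => k; exact: normr_ge0.
Qed.

End JLModeProduct.

Theorem theorem3 (R : realType) (d : nat) (n : 'I_d -> nat) (r : nat)
  (alpha : 'I_r -> R[i]) (y : forall l : 'I_d, 'I_r -> 'cV[R[i]]_(n l))
  (j : 'I_d) (eps : R[i]) (m : nat) (A : 'M[R[i]]_(m, n j)) :
  standard_form y ->
  0 < eps < 1 ->
  JL_embedding (eps / 4) A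
    (fun x => (exists h k : 'I_r, (h < k)%N /\
                 (x = y j k - y j h \/ x = y j k + y j h \/
                  x = y j k - 'i *: y j h \/ x = y j k + 'i *: y j h))
              \/ (exists k : 'I_r, x = y j k)) ->
  let Y : tensor R n := rank_tensor alpha y in
  let Y' : tensor R (upd n j m) := mode_prod Y A in
  let nA (k : 'I_r) : R[i] := vnorm (A *m y j k) in
  let alpha' (k : 'I_r) : R[i] := alpha k * nA k in
  let y' : forall l : 'I_d, 'I_r -> 'cV[R[i]]_(upd n j m l) :=
    fun l k => \col_(t < upd n j m l)
       (if l == j then vget ((nA k)^-1 *: (A *m y j k)) t else vget (y l k) t) in
  let mu (l : 'I_d) : R[i] := coherence (y l) in
  let mu' (l : 'I_d) : R[i] := coherence (y' l) in
  let muY : R[i] := \big[Num.max/0]_(l < d) mu l in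
  [/\ (forall k : 'I_r, `|alpha' k - alpha k| <= eps * `|alpha k| / 4),
      inf_norm alpha' <= (1 + eps / 4) * inf_norm alpha,
      mu' j <= (mu j + eps) / (1 - eps / 4),
      (forall l : 'I_d, l != j -> mu' l = mu l) &
      [/\ `|tnorm Y' ^+ 2 - tnorm Y ^+ 2|
            <= eps * (1 + sqrtC (r * (r - 1))%:R * \prod_(l < d | l != j) mu l)
                   * l2_norm alpha ^+ 2,
          eps * (1 + sqrtC (r * (r - 1))%:R * \prod_(l < d | l != j) mu l)
              * l2_norm alpha ^+ 2
            <= eps * (1 + r%:R * muY ^+ d.-1) * l2_norm alpha ^+ 2 &
          eps * (1 + r%:R * muY ^+ d.-1) * l2_norm alpha ^+ 2
            <= eps * (r%:R + 1) * l2_norm alpha ^+ 2]].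
Proof.
move=> y_std /andP[eps_gt0 eps_lt1] A_JL Y Y' nA alpha' y' mu mu' muY.
have A_JL_factors : JL_embedding (eps / 4) A (fun x => exists k, x = y j k).
  by apply: JL_embedding_sub A_JL => x; right.
have A_JL_pairs (h k : 'I_r) : (h < k)%N -> JL_embedding (eps / 4) A
    (fun x => x = y j k - y j h \/ x = y j k + y j h \/
              x = y j k - 'i *: y j h \/ x = y j k + 'i *: y j h).
  by move=> hk; apply: JL_embedding_sub A_JL => x; left; exists h, k.
have mu_bounds := coherence_std y_std.
have l2_ge0 : 0 <= l2_norm alpha ^+ 2.
  by rewrite exprn_ge0 ?sqrtC_ge0 // sumr_ge0 // => k _; rewrite exprn_ge0.
split; [exact: weights_perturbation | exact: inf_norm_perturbation |
        exact: coherence_JL_mode | exact: coherence_other_modes | split].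
- exact: tnorm_JL_mode.
- by apply: prod_le_bigmax_pow (ltW eps_gt0) l2_ge0 => l; case/andP: (mu_bounds l).
have muY_bounds : 0 <= muY <= 1.
  by apply/andP; split; [apply: bigmax_ge0 | apply: bigmax_le] => // l _; case/andP: (mu_bounds l).
exact: pow_le1_bound (ltW eps_gt0) l2_ge0 muY_bounds.
Qed.
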